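(* Let $\mathcal G$ be a shortest-path game in which $\mathrm{Val}^{\mathrm d}(v)\neq+\infty$ and $\overline{\mathrm{Val}}^{\mathrm m}(v)\neq+\infty$ for all vertices $v$. Let $\sigma_1$ be a fake-optimal NC-strategy of Min, $\sigma_2$ an attractor strategy of Min, $p\in(0,1)$, $\rho_p$ the memoryless strategy defined below, and $v_0\in V$. Then for every memoryless strategy $\tau$ of Max, $\mathbb P^{\rho_p,\tau}_{v_0}(\Diamond T)=1$, i.e. the target set is reached with probability 1.
   Context: A shortest-path game is $\mathcal G=(V_{\mathrm{Max}},V_{\mathrm{Min}},T,E,w)$ with finite $V=V_{\mathrm{Max}}\uplus V_{\mathrm{Min}}\uplus T$, edges $E\subseteq (V\setminus T)\times V$ with every non-target vertex having a successor, and integer weights $w\colon E\to\mathbb Z$. Plays from $v$ are finite paths ending at their first visit to $T$ (total payoff $\mathrm{TP}$ = sum of weights) or infinite paths avoiding $T$ ($\mathrm{TP}=+\infty$). Strategies of Min (resp. Max) map finite paths ending in $V_{\mathrm{Min}}$ (resp. $V_{\mathrm{Max}}$) to distributions on successors of the last vertex; deterministic = always Dirac, memoryless = depends only on the last vertex. For deterministic $\sigma,\tau$, $\mathrm{Val}^\sigma(v)=\sup_\tau \mathrm{TP}$ of the unique conforming play, and $\mathrm{Val}^{\mathrm d}(v)=\inf_\sigma\mathrm{Val}^\sigma(v)$. For memoryless $\rho$ (Min) and $\tau$ (Max), $\mathbb P^{\rho,\tau}_v$ and $\mathbb E^{\rho,\tau}_v$ refer to the induced Markov chain from $v$; $\overline{\mathrm{Val}}^{\mathrm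 m}(v)=\inf_\rho\sup_\tau\mathbb E^{\rho,\tau}_v(\mathrm{TP})$ over memoryless strategies. A path conforms to a memoryless deterministic Min strategy $\sigma_1$ if each Min vertex $u$ on it (except possibly the last) is followed by $\sigma_1(u)$. An NC-strategy is a memoryless deterministic Min strategy all of whose conforming cycles have negative total weight; it is fake-optimal if for all $v$, every finite play from $v$ ending in $T$ conforming to it has total payoff at most $\mathrm{Val}^{\mathrm d}(v)$. An attractor strategy is a memoryless deterministic Min strategy guaranteeing that every conforming play reaches $T$. The strategy $\rho_p$: for $v\in V_{\mathrm{Min}}$, if the strongly connected component of $v$ in $(V,E)$ contains no negative-weight cycle, $\rho_p(v)$ is the Dirac distribution on $\sigma_1(v)$; otherwise, if $\sigma_1(v)\ne\sigma_2(v)$, $\rho_p(v)$ chooses $\sigma_1(v)$ with probability $p$ and $\sigma_2(v)$ with probability $1-p$, and if $\sigma_1(v)=\sigma_2(v)$ it chooses it with probability 1. *)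

From HB Require Import structures.
From mathcomp Require Import all_boot all_order all_algebra.
From mathcomp Require Import boolp classical_sets functions reals ereal esum.
Set Implicit Arguments.
Unset Strict Implicit.
Unset Printing Implicit Defensive.
Import Order.TTheory GRing.Theory Num.Theory.
Local Open Scope classical_set_scope.
Local Open Scope ring_scope.

Record game (V : finType) := Game {
  VMax : {set V};
  VMin : {set V};
  Tg   : {set V};
  E    : rel V;
  w    : V -> V -> int }.

Definition wf_game (V : finType) (G : game V) : Prop :=
  [/\ [&& [disjoint VMax G & VMin G], [disjoint VMax G & Tg G]
       & [disjoint VMin G & Tg G]], (forall v, [|| v \in VMax G, v \in VMin G | v \in Tg G]),
      (forall u v, E G u v -> u \notin Tg G) &
      (forall u, u \notin Tg G -> exists v, E G u v)].

Fixpoint pweight (V : Type) (w : V -> V -> int) (x : V) (s : seq V) : int :=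
  if s is y :: s' then w x y + pweight w y s' else 0.

Definition is_finplay (V : finType) (G : game V) (x : V) (s : seq V) : bool :=
  [&& path (E G) x s, last x s \in Tg G & all (fun y => y \notin Tg G) (belast x s)].

(* A history is a finite path x :: s (x = initial vertex); a strategy  *)
(* maps it to the next vertex.                                          *)
Definition dstrat (V : Type) := V -> seq V -> V.

Definition valid_dstrat (V : finType) (G : game V) (S : {set V}) (sg : dstrat V) :=
  forall x s, last x s \in S -> E G (last x s) (sg x s).

Fixpoint ppref (V : finType) (G : game V) (sg tau : dstrat V) (v : V) (n : nat)
  : seq V :=
  match n with
  | 0 => [::]
  | n.+1 => let s := ppref G sg tau v n in
            let c := last v s in
            if c \in Tg G then s
            else rcons s (if c \in VMin G then sg v s else tau v s)
  end.

Definition dTP (R : realType) (V : finType) (G : game V) (sg tau : dstrat V)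
  (v : V) : \bar R :=
  match pselect (exists n, last v (ppref G sg tau v n) \in Tg G) with
  | left H => (((pweight (w G) v (ppref G sg tau v (projT1 (cid H))))%:~R : R)%:E)
  | right _ => +oo%E
  end.

Definition Val_sigma (R : realType) (V : finType) (G : game V) (sg : dstrat V)
  (v : V) : \bar R :=
  ereal_sup [set dTP R G sg tau v | tau in [set tau | valid_dstrat G (VMax G) tau]].

Definition Val_d (R : realType) (V : finType) (G : game V) (v : V) : \bar R :=
  ereal_inf [set Val_sigma R G sg v | sg in [set sg | valid_dstrat G (VMin G) sg]].

Definition valid_md (V : finType) (G : game V) (sg : V -> V) :=
  forall u, u \in VMin G -> E G u (sg u).

Definition conforms (V : finType) (G : game V) (sg : V -> V) (x : V) (s : seq V) :=
  path (fun a b => (a \in VMin G) ==> (b == sg a)) x s.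

Definition is_cycle (V : finType) (G : game V) (x : V) (s : seq V) :=
  [&& s != [::], path (E G) x s & last x s == x].

Definition NC_strategy (V : finType) (G : game V) (sg : V -> V) : Prop :=
  valid_md G sg /\
  forall x s, is_cycle G x s -> conforms G sg x s -> pweight (w G) x s < 0.

Definition fake_optimal (R : realType) (V : finType) (G : game V) (sg : V -> V) :=
  forall v s, is_finplay G v s -> conforms G sg v s ->
    ((((pweight (w G) v s)%:~R : R)%:E) <= Val_d R G v)%E.

(* every conforming play reaches T, i.e. there is no infinite conforming
   path (such a path necessarily avoids T, which has no outgoing edges) *)
Definition attractor (V : finType) (G : game V) (sg : V -> V) : Prop :=
  valid_md G sg /\
  ~ exists f : nat -> V, (forall i, E G (f i) (f i.+1)) /\
      (forall i, f i \in VMin G -> f i.+1 = sg (f i)).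

Definition scc (V : finType) (G : game V) (v : V) : pred V :=
  fun u => connect (E G) v u && connect (E G) u v.

Definition scc_has_neg_cycle (V : finType) (G : game V) (v : V) : Prop :=
  exists x s, [/\ is_cycle G x s, all (scc G v) (x :: s) & pweight (w G) x s < 0].

Definition rho_p (R : realType) (V : finType) (G : game V) (s1 s2 : V -> V) (p : R)
  : V -> V -> R :=
  fun v u =>
    if `[< scc_has_neg_cycle G v >] && (s1 v != s2 v) then
      (if u == s1 v then p else if u == s2 v then 1 - p else 0)
    else (u == s1 v)%:R.

Definition valid_mr (R : realType) (V : finType) (G : game V) (S : {set V})
  (t : V -> V -> R) : Prop :=
  forall u, u \in S ->
    [/\ forall v, 0 <= t u v, \sum_v t u v = 1 & forall v, 0 < t u v -> E G u v].

(* transition probabilities; targets are absorbing (plays stop there) *)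
Definition chain (R : realType) (V : finType) (G : game V) (rho tau : V -> V -> R)
  (u v : V) : R :=
  if u \in VMin G then rho u v else if u \in VMax G then tau u v else 0.

Fixpoint reachn (R : realType) (V : finType) (G : game V) (rho tau : V -> V -> R)
  (n : nat) : V -> R :=
  fun v => match n with
  | 0 => (v \in Tg G)%:R
  | n.+1 => if v \in Tg G then 1
            else \sum_u chain G rho tau v u * reachn G rho tau n u
  end.

(* P^{rho,tau}_v (<> T) = lim_n P(<>^{<= n} T) = sup_n *)
Definition Preach (R : realType) (V : finType) (G : game V) (rho tau : V -> V -> R)
  (v : V) : R := sup (range (fun n => reachn G rho tau n v)).

(* probability of the cylinder of the finite path x :: s *)
Fixpoint pprob (R : realType) (V : finType) (G : game V) (rho tau : V -> V -> R)
  (x : V) (s : seq V) : R :=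
  if s is y :: s' then chain G rho tau x y * pprob G rho tau y s' else 1.

(* E^{rho,tau}_v(TP) = \int TP^+ - \int TP^- ; TP = +oo off <>T *)
Definition ETP (R : realType) (V : finType) (G : game V) (rho tau : V -> V -> R)
  (v : V) : \bar R :=
  if Preach G rho tau v < 1 then +oo%E
  else ((\esum_(s in [set s | is_finplay G v s])
           (pprob G rho tau v s * Num.max ((pweight (w G) v s)%:~R) 0)%:E)
        - (\esum_(s in [set s | is_finplay G v s])
           (pprob G rho tau v s * Num.max (- (pweight (w G) v s)%:~R) 0)%:E))%E.

Definition Val_m_bar (R : realType) (V : finType) (G : game V) (v : V) : \bar R :=
  ereal_inf [set ereal_sup [set ETP G rho tau v |
                              tau in [set tau | valid_mr G (VMax G) tau]]
            | rho in [set rho | valid_mr G (VMin G) rho]].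

From HB Require Import structures.
From mathcomp Require Import all_boot all_order all_algebra.
From mathcomp Require Import boolp classical_sets functions reals ereal esum.
From mathcomp Require Import lra.
Import Order.TTheory GRing.Theory Num.Theory.
Local Open Scope classical_set_scope.
Local Open Scope ring_scope.

Set Implicit Arguments.
Unset Strict Implicit.

(* Under [rho_p], whatever memoryless strategy Max plays, every vertex has a
   path of positive probability to T; in a finite chain this forces T to be
   reached almost surely, since within some uniform number N of steps every
   vertex reaches T with probability at least 1 - c > 0, so the probability
   of avoiding T shrinks by the factor c < 1 every N steps.
   To find such a path, walk from a vertex along successors of positive
   probability, preferring [sigma2] at Min vertices.  If T were never reached,
   the walk would enter a cycle.  If the SCC of that cycle had no negative
   cycle, [rho_p] would be the Dirac on [sigma1] along it, making it a
   [sigma1]-cycle inside that SCC, which is negative since [sigma1] is NC.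
   So [sigma2] has positive probability, hence is chosen, at every Min vertex
   of the cycle, which therefore is an infinite play conforming to the
   attractor strategy [sigma2]: a contradiction. *)

Definition chain_support (R : realType) (V : finType) (G : game V)
  (rho tau : V -> V -> R) : rel V :=
  fun u v => 0 < chain G rho tau u v.

Definition reaches_target (R : realType) (V : finType) (G : game V)
  (rho tau : V -> V -> R) (v : V) : Prop :=
  exists2 t, t \in Tg G & connect (chain_support G rho tau) v t.

Section ReachProbability.
Variables (R : realType) (V : finType) (G : game V) (rho tau : V -> V -> R).

Local Notation P := (chain G rho tau).
Local Notation reach n := (reachn G rho tau n).

Hypothesis chain_ge0 : forall u v, 0 <= P u v.
Hypothesis chain_sum1 : forall u, u \notin Tg G -> \sum_v P u v = 1.

Lemma reachn_T n v : v \in Tg G -> reach n v = 1.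
Proof. by case: n => [|n] /= ->. Qed.

Lemma reachn_ge0 n v : 0 <= reach n v.
Proof.
elim: n v => [|n IH] v /=; first by case: (v \in Tg G).
by case: (v \in Tg G) => //; apply: sumr_ge0 => u _; apply: mulr_ge0.
Qed.

Lemma reachn_le1 n v : reach n v <= 1.
Proof.
elim: n v => [|n IH] v /=; first by case: (v \in Tg G).
case: ifP => // vT; rewrite -(chain_sum1 (negbT vT)).
by apply: ler_sum => u _; rewrite ler_piMr.
Qed.

Lemma reachn_homo v : {homo (fun n => reach n v) : m n / (m <= n)%N >-> m <= n}.
Proof.
apply: homo_leq => [x|y x z /le_trans|n]; [exact: lexx | exact |].
elim: n v => [|n IH] v /=; case: (v \in Tg G) => //=.
  by apply: sumr_ge0 => u _; rewrite mulr_ge0 //; case: (u \in Tg G).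
by apply: ler_sum => u _; apply: ler_wpM2l.
Qed.

Lemma reachn_gt0_path x s :
  path (chain_support G rho tau) x s -> last x s \in Tg G ->
  0 < reach (size s) x.
Proof.
elim: s x => [|y s IH] x /=; first by move=> _ ->.
move=> /andP[Pxy ys] sT; case: ifP => // _.
rewrite (bigD1 y) //=; apply: ltr_pwDl; first exact: mulr_gt0 Pxy (IH y ys sT).
by apply: sumr_ge0 => u _; apply: mulr_ge0; last exact: reachn_ge0.
Qed.

(* Markov property: missing T for [m + n] steps means missing it for [m]
   steps and then for [n] more steps from wherever the chain stands. *)
Lemma reachn_fail_add n c : (forall u, 1 - reach n u <= c) ->
  forall m v, 1 - reach (m + n) v <= c * (1 - reach m v).
Proof.
move=> fail_n; elim=> [|m IH] v /=.
  have [vT|vT] := boolP (v \in Tg G); last by rewrite add0n subr0 mulr1.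
  by rewrite reachn_T // subrr mulr0.
case: ifP => vT; first by rewrite subrr mulr0.
have fail_step f : 1 - \sum_u P v u * f u = \sum_u P v u * (1 - f u).
  rewrite -{1}(chain_sum1 (negbT vT)) -sumrB.
  by apply: eq_bigr => u _; rewrite mulrBr mulr1.
rewrite !fail_step mulr_sumr; apply: ler_sum => u _.
by rewrite mulrCA; apply: ler_wpM2l.
Qed.

Lemma Preach_eq1_uniform N v : (forall u, 0 < reach N u) -> Preach G rho tau v = 1.
Proof.
move=> reachN_gt0.
have [u0 _ minN] := arg_minP (fun u => reach N u) (i0 := v) (P := predT) isT.
set c := 1 - reach N u0.
have c_ge0 : 0 <= c by rewrite subr_ge0 reachn_le1.
have c_lt1 : c < 1 by rewrite ltrBlDr ltrDl.
have fail_N u : 1 - reach N u <= c by rewrite lerD2l lerN2 minN.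
set S := range (fun n => reach n v).
have S_ub : ubound S 1 by move=> _ [n _ <-]; apply: reachn_le1.
have S_ge n : reach n v <= sup S.
  by apply: sup_upper_bound; [split; [exists (reach 0 v), 0%N | exists 1] | exists n].
have fail_sup m : 1 - sup S <= c * (1 - reach m v).
  apply: le_trans (reachn_fail_add fail_N m v); rewrite lerD2l lerN2; exact: S_ge.
(* [1 - sup S <= c * (1 - reach m v)] for all [m] gives
   [1 - sup S <= c * (1 - sup S)], impossible with [c < 1] unless [sup S = 1]. *)
apply/eqP; rewrite /Preach -/S eq_le ge_sup //=; last by exists (reach 0 v), 0%N.
rewrite leNgt; apply/negP => S_lt1.
have c_gt0 : 0 < c.
  have := fail_sup 0%N; have := reachn_ge0 0 v; have := reachn_le1 0 v; nra.
set d := (1 - sup S) / c.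
have dc : d * c = 1 - sup S by rewrite divfK ?gt_eqF.
have : sup S <= 1 - d.
  apply: ge_sup; first by exists (reach 0 v), 0%N.
  by move=> _ [m _ <-]; have := fail_sup m; nra.
nra.
Qed.

Lemma Preach_eq1 v :
  (forall u, reaches_target G rho tau u) -> Preach G rho tau v = 1.
Proof.
move=> reach_all.
have len_gt0 u : exists n, 0 < reach n u.
  have [t tT /connectP[s us t_last]] := reach_all u.
  by exists (size s); apply: reachn_gt0_path; rewrite -?t_last.
apply: (@Preach_eq1_uniform (\max_u xchoose (len_gt0 u))) => u.
apply: lt_le_trans (xchooseP (len_gt0 u)) _.
by apply: reachn_homo; apply: leq_bigmax.
Qed.

End ReachProbability.

Lemma iter_periodic (T : finType) (f : T -> T) x :
  exists a m, (0 < m)%N /\ iter m f (iter a f x) = iter a f x.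
Proof.
have /trajectP[i lt_i iter_order] := looping_order f x.
exists i, (order f x - i)%N; split; first by rewrite subn_gt0.
by rewrite -iterD subnK ?(ltnW lt_i).
Qed.

Lemma path_traject (T : eqType) (e : rel T) (f : T -> T) x m :
  (forall i, e (iter i f x) (iter i.+1 f x)) -> path e x (traject f (f x) m).
Proof.
move=> e_iter; have in_traj : all (mem (traject f x m.+1)) (x :: traject f (f x) m).
  by rewrite -trajectS; apply: allss.
apply: sub_in_path in_traj (fpath_traject f x m).
by move=> _ _ /trajectP[i _ ->] _ /eqP <-.
Qed.

Lemma connect_iter (T : finType) (e : rel T) (f : T -> T) x k :
  (forall i, e (iter i f x) (iter i.+1 f x)) -> connect e x (iter k f x).
Proof.
move=> e_iter; apply/connectP; exists (traject f (f x) k); last by rewrite last_traject.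
exact: path_traject.
Qed.

Lemma connect_iter_periodic (T : finType) (e : rel T) (f : T -> T) x m k :
  (0 < m)%N -> iter m f x = x ->
  (forall i, e (iter i f x) (iter i.+1 f x)) -> connect e (iter k f x) x.
Proof.
move=> m_gt0 per e_iter.
have iter_mul q : iter (q * m) f x = x by elim: q => // q IH; rewrite mulSn iterD IH.
rewrite -{2}(iter_mul k) -(subnK (leq_pmulr k m_gt0)) iterD.
by apply: connect_iter => i; rewrite -!iterD.
Qed.

Lemma scc_neg_cycle (V : finType) (G : game V) x y :
  scc G x y -> scc_has_neg_cycle G x <-> scc_has_neg_cycle G y.
Proof.
suff trans a b : scc G a b -> scc_has_neg_cycle G a -> scc_has_neg_cycle G b.
  by move=> xy; split; apply: trans; rewrite // /scc andbC.
move=> /andP[ab ba] [c [s [cyc in_scc neg]]]; exists c, s; split => //.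
apply: sub_all in_scc => z /andP[az za].
by rewrite /scc (connect_trans ba az) (connect_trans za ab).
Qed.

Section RhoP.
Variables (R : realType) (V : finType) (G : game V) (s1 s2 : V -> V) (p : R).
Hypothesis p01 : 0 < p < 1.

Local Notation rho := (rho_p G s1 s2 p).

Lemma rho_p_ge0 v u : 0 <= rho v u.
Proof.
by move: p01 => /andP[? ?]; rewrite /rho_p; do !case: ifP => _ //=; lra.
Qed.

Lemma rho_p_sum1 v : \sum_u rho v u = 1.
Proof.
rewrite /rho_p; case: (boolP (_ && _)) => [/andP[_ s12] | _] /=.
  rewrite (bigD1 (s1 v)) //= eqxx (bigD1 (s2 v)) 1?eq_sym //= (ifN_eq _ _ s12).
  rewrite eqxx big1 ?addr0 ?subrKC // => u /andP[u1 u2].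
  by rewrite (ifN_eq _ _ u1) (ifN_eq _ _ u2).
by rewrite (bigD1 (s1 v)) //= eqxx big1 ?addr0 // => u /negbTE ->.
Qed.

Lemma rho_p_support v u : 0 < rho v u -> u = s1 v \/ u = s2 v.
Proof.
move=> rho_gt0; have [->|u1] := eqVneq u (s1 v); [by left | right].
move: rho_gt0; rewrite /rho_p (negbTE u1); case: ifP => _; last by rewrite ltxx.
by case: eqP => // _; rewrite ltxx.
Qed.

Lemma rho_p_dirac v u : ~ scc_has_neg_cycle G v -> rho v u = (u == s1 v)%:R.
Proof. by move=> /asboolPn no_neg; rewrite /rho_p (negbTE no_neg). Qed.

Lemma rho_p_sigma2_gt0 v : scc_has_neg_cycle G v -> 0 < rho v (s2 v).
Proof.
move: p01 => /andP[? ?] /asboolP neg; rewrite /rho_p neg /= eqxx.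
by case: eqVneq => _ /=; rewrite ?ltr01 ?subr_gt0.
Qed.

End RhoP.

Section PositiveSuccessor.
Variables (R : realType) (V : finType) (G : game V).
Variables (sigma1 sigma2 : V -> V) (p : R) (tau : V -> V -> R).
Hypothesis cover : forall v, [|| v \in VMax G, v \in VMin G | v \in Tg G].
Hypothesis sigma1_NC : NC_strategy G sigma1.
Hypothesis sigma2_attr : attractor G sigma2.
Hypothesis p01 : 0 < p < 1.
Hypothesis tau_valid : valid_mr G (VMax G) tau.

Local Notation rho := (rho_p G sigma1 sigma2 p).
Local Notation P := (chain G rho tau).

Lemma notT_notMin_VMax v : v \notin Tg G -> v \notin VMin G -> v \in VMax G.
Proof. by move=> /negbTE vT /negbTE vMin; have := cover v; rewrite vT vMin !orbF. Qed.

Lemma chain_rho_ge0 u v : 0 <= P u v.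
Proof.
rewrite /chain; case: ifP => _; first exact: rho_p_ge0.
by case: ifP => // uMax; have [] := tau_valid uMax.
Qed.

Lemma chain_rho_sum1 u : u \notin Tg G -> \sum_v P u v = 1.
Proof.
move=> uT; rewrite /chain; case: (boolP (u \in VMin G)) => uMin.
  exact: rho_p_sum1.
by have uMax := notT_notMin_VMax uT uMin; rewrite uMax; have [] := tau_valid uMax.
Qed.

Lemma chain_support_edge u v : chain_support G rho tau u v -> E G u v.
Proof.
rewrite /chain_support /chain; case: ifP => [uMin /rho_p_support[]->|_].
- by case: sigma1_NC => valid1 _; apply: valid1.
- by case: sigma2_attr => valid2 _; apply: valid2.
by case: ifP => [uMax|_]; [have [_ _] := tau_valid uMax; apply | rewrite ltxx].
Qed.

Definition pos_succ v : V :=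
  if v \in VMin G then (if 0 < rho v (sigma2 v) then sigma2 v else sigma1 v)
  else odflt v [pick u | 0 < tau v u].

Lemma pos_succ_gt0 v : v \notin Tg G -> chain_support G rho tau v (pos_succ v).
Proof.
move=> vT; rewrite /chain_support /chain /pos_succ.
case: (boolP (v \in VMin G)) => vMin.
  case: ifP => // _; rewrite /rho_p eqxx.
  by case: ifP => _; [case/andP: p01 | rewrite ltr01].
have vMax := notT_notMin_VMax vT vMin; rewrite vMax.
case: pickP => [//|tau_eq0]; have [tau_ge0 tau_sum1 _] := tau_valid vMax.
move: tau_sum1; rewrite big1 => [/eqP|u _]; first by rewrite eq_sym oner_eq0.
by apply/eqP; rewrite eq_le tau_ge0 leNgt tau_eq0.
Qed.

Lemma pos_succ_sigma1 v :
  v \in VMin G -> ~ scc_has_neg_cycle G v -> pos_succ v = sigma1 v.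
Proof.
move=> vMin no_neg; rewrite /pos_succ vMin rho_p_dirac //.
by case: eqP => [->|_]; rewrite ?ltxx //; case: ifP.
Qed.

Lemma pos_succ_sigma2 v :
  v \in VMin G -> scc_has_neg_cycle G v -> pos_succ v = sigma2 v.
Proof. by move=> vMin neg; rewrite /pos_succ vMin rho_p_sigma2_gt0. Qed.

Lemma reaches_target_pos_succ v : v \notin Tg G ->
  reaches_target G rho tau (pos_succ v) -> reaches_target G rho tau v.
Proof.
move=> vT [t tT succ_t]; exists t => //.
by apply: connect_trans succ_t; apply: connect1; apply: pos_succ_gt0.
Qed.

Lemma notT_of_unreached v : ~ reaches_target G rho tau v -> v \notin Tg G.
Proof. by move=> unreached; apply/negP => vT; apply: unreached; exists v. Qed.

Lemma unreached_iter z k : ~ reaches_target G rho tau z ->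
  ~ reaches_target G rho tau (iter k pos_succ z).
Proof.
move=> unreached; elim: k => // k IH; rewrite iterS => reached.
by apply: (IH); apply: reaches_target_pos_succ (notT_of_unreached IH) reached.
Qed.

Section PeriodicOrbit.
Variables (u : V) (m : nat).
Hypothesis m_gt0 : (0 < m)%N.
Hypothesis u_periodic : iter m pos_succ u = u.
Hypothesis orbit_notT : forall k, iter k pos_succ u \notin Tg G.

Lemma periodic_edge k : E G (iter k pos_succ u) (iter k.+1 pos_succ u).
Proof. by rewrite iterS; apply/chain_support_edge/pos_succ_gt0. Qed.

Lemma periodic_scc k : scc G u (iter k pos_succ u).
Proof.
apply/andP; split; first exact: connect_iter periodic_edge.
exact: connect_iter_periodic m_gt0 u_periodic periodic_edge.
Qed.

Lemma periodic_neg_cycle : scc_has_neg_cycle G u.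
Proof.
apply: contrapT => no_neg.
have follows1 k : iter k pos_succ u \in VMin G ->
    iter k.+1 pos_succ u = sigma1 (iter k pos_succ u).
  move=> kMin; rewrite iterS pos_succ_sigma1 // => neg.
  by apply: no_neg; apply/(scc_neg_cycle (periodic_scc k)).
set s := traject pos_succ (pos_succ u) m.
have cyc : is_cycle G u s.
  rewrite /is_cycle path_traject; last exact: periodic_edge.
  by rewrite -size_eq0 size_traject -lt0n m_gt0 last_traject u_periodic eqxx.
have conf : conforms G sigma1 u s.
  by apply: path_traject => k; apply/implyP => /follows1 ->.
apply: no_neg; exists u, s; split; last by case: sigma1_NC => _; apply.
- exact: cyc.
by rewrite -trajectS; apply/allP => _ /trajectP[k _ ->]; apply: periodic_scc.
Qed.

End PeriodicOrbit.

Lemma reaches_target_all z : reaches_target G rho tau z.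
Proof.
apply: contrapT => unreached.
have [a [m [m_gt0 periodic]]] := iter_periodic pos_succ z.
set y := iter a pos_succ z in periodic.
have orbit_notT k : iter k pos_succ y \notin Tg G.
  by rewrite /y -iterD; apply/notT_of_unreached/unreached_iter.
have neg := periodic_neg_cycle m_gt0 periodic orbit_notT.
case: sigma2_attr => _; apply; exists (fun k => iter k pos_succ y); split => k.
  exact: periodic_edge.
move=> kMin; rewrite iterS pos_succ_sigma2 //.
exact/(scc_neg_cycle (periodic_scc m_gt0 periodic orbit_notT k)).
Qed.

End PositiveSuccessor.

Theorem proposition11 (R : realType) (V : finType) (G : game V)
  (sigma1 sigma2 : V -> V) (p : R) (v0 : V) :
  wf_game G ->
  (forall v, Val_d R G v != +oo%E) ->
  (forall v, Val_m_bar R G v != +oo%E) ->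
  NC_strategy G sigma1 -> fake_optimal R G sigma1 ->
  attractor G sigma2 ->
  0 < p < 1 ->
  forall tau : V -> V -> R, valid_mr G (VMax G) tau ->
    Preach G (rho_p G sigma1 sigma2 p) tau v0 = 1.
Proof.
move=> [_ cover _ _] _ _ NC _ attr p01 tau tau_valid.
apply: Preach_eq1 => [u v | u uT | u].
- exact: chain_rho_ge0.
- exact: chain_rho_sum1.
- exact: reaches_target_all.
Qed.
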